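(* Let $\mathbf{X}\subseteq\mathbb{R}_+^n$ be an interval and let $\mathrm{IC}(\mathbf{a}_0,\dots,\mathbf{a}_{n-1})$ be an interval circulant matrix containing $\hat A$. Then $\mathrm{IC}(\mathbf{a}_0,\dots,\mathbf{a}_{n-1})$ is possibly $\mathbf{X}$-robust, i.e. there exists $A\in\mathrm{IC}(\mathbf{a}_0,\dots,\mathbf{a}_{n-1})$ with $x\in\mathrm{Attr}(A)$ for all $x\in\mathbf{X}$, if and only if $x^{(i)}\in\mathrm{Attr}(\hat A)$ for all $i\in\{1,\dots,n\}$.
   Context: Max algebra on $\mathbb{R}_+$: $\oplus=\max$, ordinary product, $A^t$ max-algebraic power; $\lambda(A)$ greatest max-algebraic eigenvalue (maximum cycle geometric mean); $\mathrm{Attr}(A)=\{x\in\mathbb{R}_+^n: A^{t+1}\otimes x=\lambda(A)A^t\otimes x\text{ for some } t\ge0\}$. An interval $\mathbf{X}=\prod_i\mathbf{X}_i$ has each $\mathbf{X}_i\subseteq\mathbb{R}_+$ nonempty of one of the forms $[\underline{x}_i,\overline{x}_i]$, $(\underline{x}_i,\overline{x}_i)$, $(\underline{x}_i,\overline{x}_i]$, $[\underline{x}_i,\overline{x}_i)$; $x^{(k)}=(\underline{x}_1,\dots,\underline{x}_{k-1},\overline{x}_k,\underline{x}_{k+1},\dots,\underline{x}_n)$. $\mathrm{Circ}(a_0,\dots,a_{n-1})$ has entries $A_{i,j}=a_t$, $t\equiv j-i\pmod n$, $t\in\{0,..,n-1\}$; the interval circulant matrix $\mathrm{IC}(\mathbf{a}_0,\dots,\mathbf{a}_{n-1})$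 is the set of all $\mathrm{Circ}(a_0,\dots,a_{n-1})$ with $a_t\in\mathbf{a}_t$, each $\mathbf{a}_t\subseteq\mathbb{R}_+$ a nonempty interval of one of the four forms with endpoints $\underline a_t\le\overline a_t$. $\underline a=\max_k\underline a_k$, $\hat A=\mathrm{Circ}(\hat a_0,\dots,\hat a_{n-1})$ with $\hat a_i=\min\{\underline a,\overline a_i\}$. *)

(* Indices are natural numbers 0..n-1; vectors are nat -> R, matrices nat -> nat -> R;
   only indices < n are ever inspected. *)
From Stdlib Require Import Reals List Arith ListDec.
Import ListNotations.
Open Scope R_scope.

(* max-algebraic sum over indices 0..n-1 (0 is the neutral element on R_+) *)
Definition maxl (n : nat) (f : nat -> R) : R :=
  fold_right Rmax 0 (map f (seq 0 n)).

Definition mmul (n : nat) (A B : nat -> nat -> R) : nat -> nat -> R :=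
  fun i j => maxl n (fun k => A i k * B k j).
Definition mvec (n : nat) (A : nat -> nat -> R) (x : nat -> R) : nat -> R :=
  fun i => maxl n (fun j => A i j * x j).
Definition mid : nat -> nat -> R := fun i j => if Nat.eq_dec i j then 1 else 0.
Fixpoint mpow (n : nat) (A : nat -> nat -> R) (t : nat) : nat -> nat -> R :=
  match t with
  | O => mid
  | S t' => mmul n A (mpow n A t')
  end.

Fixpoint idx_lists (n k : nat) : list (list nat) :=
  match k with
  | O => [[]]
  | S k' => flat_map (fun i => map (cons i) (idx_lists n k')) (seq 0 n)
  end.

Fixpoint walkw (A : nat -> nat -> R) (i : nat) (l : list nat) (j : nat) : R :=
  match l with
  | [] => A i j
  | h :: t => A i h * walkw A h t j
  end.

Definition kroot (k : nat) (w : R) : R :=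
  if Rle_dec w 0 then 0 else Rpower w (/ INR k).

(* geometric mean of the elementary cycle (i0 i1 ... i_{k-1} i0); 0 for non-cycles *)
Definition cycle_gmean (A : nat -> nat -> R) (c : list nat) : R :=
  match c with
  | [] => 0
  | i0 :: rest =>
      if NoDup_dec Nat.eq_dec c then kroot (length c) (walkw A i0 rest i0) else 0
  end.

Definition lambda (n : nat) (A : nat -> nat -> R) : R :=
  fold_right Rmax 0
    (map (cycle_gmean A) (flat_map (fun k => idx_lists n k) (seq 1 n))).

Definition Attr (n : nat) (A : nat -> nat -> R) (x : nat -> R) : Prop :=
  (forall i, (i < n)%nat -> 0 <= x i) /\
  exists t : nat, forall i, (i < n)%nat ->
    mvec n (mpow n A (S t)) x i = lambda n A * mvec n (mpow n A t) x i.

Record ival := Ival { lo : R; hi : R; lo_closed : bool; hi_closed : bool }.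

Definition in_ival (I : ival) (v : R) : Prop :=
  (if lo_closed I then lo I <= v else lo I < v) /\
  (if hi_closed I then v <= hi I else v < hi I).

Definition wf_ival (I : ival) : Prop :=
  0 <= lo I /\ lo I <= hi I /\ exists v, in_ival I v.

Definition Circ (n : nat) (a : nat -> R) : nat -> nat -> R :=
  fun i j => a ((j + n - i) mod n)%nat.

Definition lo_max (n : nat) (ia : nat -> ival) : R := maxl n (fun k => lo (ia k)).
Definition hat_a (n : nat) (ia : nat -> ival) : nat -> R :=
  fun i => Rmin (lo_max n ia) (hi (ia i)).
Definition hatA (n : nat) (ia : nat -> ival) : nat -> nat -> R := Circ n (hat_a n ia).

(* x^(k) = (lower_1,...,lower_{k-1}, upper_k, lower_{k+1},...) (0-based k) *)
Definition xk (X : nat -> ival) (k : nat) : nat -> R :=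
  fun i => if Nat.eq_dec i k then hi (X i) else lo (X i).

Definition possibly_robust (n : nat) (ia X : nat -> ival) : Prop :=
  exists a : nat -> R,
    (forall t, (t < n)%nat -> in_ival (ia t) (a t)) /\
    forall x : nat -> R, (forall i, (i < n)%nat -> in_ival (X i) (x i)) ->
      Attr n (Circ n a) x.

(* For a circulant A = Circ a, the entry (A^t x)_i is the maximum over step lists l
   of length t of (prod_{s in l} a_s) * x_{i + sum l (mod n)}, and lambda(A) = max a =: L.
   Once t >= n^2 every step list repeats some step n times; these n steps sum to 0 mod n
   and can be traded for copies of a critical step c (a_c = L), so that
   A^{t+1} x = L * A^t (x rotated by c).  Hence attraction happens by time n^2 if at
   all, it survives raising the coefficients below L as long as a critical step is
   kept, and at a fixed time it is an equality of two max-linear forms in x with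
   nonnegative coefficients.  Such an equality extends from points of X to their
   limits, and from the corners x^(k) of a box to the whole box.
   If some a of the interval matrix attracts all of X, it attracts the corners, and
   since mu a <= L hat_a <= mu L with mu = max_k lower(a_k), so does hat_a; conversely
   hat_a lies in the interval matrix and, attracting the corners, attracts X. *)

From Stdlib Require Import Reals Lra Lia List Arith Permutation ListDec Classical.
Import ListNotations.
Open Scope R_scope.

Definition nonneg_vec (n : nat) (x : nat -> R) : Prop := forall i, (i < n)%nat -> 0 <= x i.

Definition lmax (l : list R) : R := fold_right Rmax 0 l.

Lemma lmax_ge0 l : 0 <= lmax l.
Proof. induction l; simpl; [lra|]. apply Rle_trans with (lmax l); auto. apply Rmax_r. Qed.

Lemma lmax_ge l r : In r l -> r <= lmax l.
Proof.
  induction l; simpl; [tauto|]. intros [->|H].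
  - apply Rmax_l.
  - apply Rle_trans with (lmax l); auto. apply Rmax_r.
Qed.

Lemma lmax_le l b : 0 <= b -> (forall r, In r l -> r <= b) -> lmax l <= b.
Proof.
  intros Hb H; induction l; simpl; auto.
  apply Rmax_lub; auto. apply H; simpl; auto. apply IHl; intros; apply H; simpl; auto.
Qed.

Lemma lmax_attained l : lmax l = 0 \/ In (lmax l) l.
Proof.
  induction l; simpl; auto. fold (lmax l).
  destruct (Rle_dec a (lmax l)).
  - rewrite Rmax_right by auto. destruct IHl as [H|H]; [left|right]; auto.
  - rewrite Rmax_left by lra. right; auto.
Qed.

Lemma lmax_scale k l : 0 <= k -> lmax (map (Rmult k) l) = k * lmax l.
Proof.
  intros Hk. induction l; simpl; [ring|].
  fold (lmax (map (Rmult k) l)) (lmax l). rewrite IHl. apply RmaxRmult; auto.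
Qed.

Lemma maxl_ge0 n f : 0 <= maxl n f.
Proof. apply lmax_ge0. Qed.

Lemma maxl_ge n f k : (k < n)%nat -> f k <= maxl n f.
Proof. intros. apply lmax_ge, in_map, in_seq. lia. Qed.

Lemma maxl_le n f b : 0 <= b -> (forall k, (k < n)%nat -> f k <= b) -> maxl n f <= b.
Proof.
  intros Hb H. apply lmax_le; auto. intros r Hr. apply in_map_iff in Hr.
  destruct Hr as [k [<- Hk]]. apply in_seq in Hk. apply H. lia.
Qed.

Lemma maxl_attained n f : maxl n f = 0 \/ exists k, (k < n)%nat /\ maxl n f = f k.
Proof.
  destruct (lmax_attained (map f (seq 0 n))) as [H|H]; [left; exact H|right].
  apply in_map_iff in H. destruct H as [k [H1 H2]]. apply in_seq in H2.
  exists k; split; [lia|]. rewrite H1. reflexivity.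
Qed.

Lemma maxl_ext n f g : (forall k, (k < n)%nat -> f k = g k) -> maxl n f = maxl n g.
Proof.
  intros H. unfold maxl. f_equal. apply map_ext_in. intros k Hk. apply in_seq in Hk. apply H. lia.
Qed.

Lemma maxl_mono n f g : (forall k, (k < n)%nat -> f k <= g k) -> maxl n f <= maxl n g.
Proof.
  intros H. apply maxl_le; [apply maxl_ge0|]. intros k Hk.
  apply Rle_trans with (g k); auto. apply maxl_ge; auto.
Qed.

Lemma maxl_scale n k f : 0 <= k -> maxl n (fun s => k * f s) = k * maxl n f.
Proof. intros Hk. unfold maxl. rewrite <- lmax_scale, map_map by auto. reflexivity. Qed.

Lemma maxl_attained_index n f : (0 < n)%nat -> nonneg_vec n f ->
  exists c, (c < n)%nat /\ f c = maxl n f.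
Proof.
  intros Hn Hf. destruct (maxl_attained n f) as [H|[c [Hc H]]]; [|eauto].
  exists 0%nat. split; auto. rewrite H. apply Rle_antisym; [rewrite <- H; apply maxl_ge|apply Hf]; auto.
Qed.

Lemma in_idx_lists n t l :
  In l (idx_lists n t) <-> length l = t /\ (forall s, In s l -> (s < n)%nat).
Proof.
  revert l; induction t; intros l; simpl.
  - split.
    + intros [<-|[]]. split; simpl; auto. intros s [].
    + intros [H _]. destruct l; simpl in H; try discriminate. auto.
  - rewrite in_flat_map. split.
    + intros [i [Hi Hl]]. apply in_map_iff in Hl. destruct Hl as [l' [<- Hl']].
      apply IHt in Hl'. apply in_seq in Hi. destruct Hl' as [H1 H2].
      simpl; split; [lia|]. intros s [<-|Hs]; [lia|auto].
    + intros [H1 H2]. destruct l as [|i l']; simpl in H1; [discriminate|].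
      exists i; split.
      * apply in_seq. specialize (H2 i (or_introl eq_refl)). lia.
      * apply in_map, IHt. split; [lia|]. intros s Hs; apply H2; simpl; auto.
Qed.

Lemma mod_lt n a : (0 < n)%nat -> (a mod n < n)%nat.
Proof. intros. apply Nat.mod_upper_bound. lia. Qed.

Lemma mod_sub_add n i c : (i < n)%nat -> (c < n)%nat ->
  ((((i + c) mod n) + n - i) mod n)%nat = c.
Proof.
  intros Hi Hc. destruct (lt_dec (i + c) n).
  - rewrite (Nat.mod_small (i + c)) by lia.
    replace (i + c + n - i)%nat with (c + 1 * n)%nat by lia.
    rewrite Nat.Div0.mod_add. apply Nat.mod_small; auto.
  - replace ((i + c) mod n)%nat with (i + c - n)%nat
      by (apply Nat.mod_unique with 1%nat; lia).
    replace (i + c - n + n - i)%nat with c by lia. apply Nat.mod_small; auto.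
Qed.

Lemma mod_add_sub n i j : (i < n)%nat -> (j < n)%nat -> ((i + (j + n - i) mod n) mod n)%nat = j.
Proof.
  intros Hi Hj. rewrite Nat.Div0.add_mod_idemp_r.
  replace (i + (j + n - i))%nat with (j + 1 * n)%nat by lia.
  rewrite Nat.Div0.mod_add. apply Nat.mod_small; auto.
Qed.

Lemma mod_add_cancel_l n x y : (0 < n)%nat -> ((x + y) mod n = x mod n)%nat -> (y mod n = 0)%nat.
Proof.
  intros Hn H. rewrite Nat.Div0.add_mod in H.
  pose proof (mod_lt n x Hn). pose proof (mod_lt n y Hn).
  destruct (lt_dec (x mod n + y mod n) n).
  - rewrite Nat.mod_small in H by lia. lia.
  - replace ((x mod n + y mod n) mod n)%nat with (x mod n + y mod n - n)%nat in H
      by (apply Nat.mod_unique with 1%nat; lia).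
    lia.
Qed.

(** * Powers of a circulant matrix as maxima over walks *)

Definition suml (l : list nat) : nat := fold_right Nat.add 0%nat l.
Definition prodw (a : nat -> R) (l : list nat) : R := fold_right (fun s p => a s * p) 1 l.

Definition step_list (n t : nat) (l : list nat) : Prop :=
  length l = t /\ (forall s, In s l -> (s < n)%nat).

(* A walk of length t in Circ n a is determined by its start i and its list of
   steps l, each step s moving from j to (j + s) mod n with weight a s. *)
Definition circ_pow (n : nat) (a : nat -> R) (t : nat) (x : nat -> R) (i : nat) : R :=
  lmax (map (fun l => prodw a l * x ((i + suml l) mod n)%nat) (idx_lists n t)).

Lemma prodw_app a l1 l2 : prodw a (l1 ++ l2) = prodw a l1 * prodw a l2.
Proof. induction l1; simpl; [ring|]. rewrite IHl1. ring. Qed.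

Lemma suml_app l1 l2 : suml (l1 ++ l2) = (suml l1 + suml l2)%nat.
Proof. induction l1; simpl; auto. rewrite IHl1. lia. Qed.

Lemma prodw_repeat a s k : prodw a (repeat s k) = a s ^ k.
Proof. induction k; simpl; auto. rewrite IHk. ring. Qed.

Lemma suml_repeat s k : suml (repeat s k) = (k * s)%nat.
Proof. induction k; simpl; auto. Qed.

Lemma prodw_perm a l1 l2 : Permutation l1 l2 -> prodw a l1 = prodw a l2.
Proof. induction 1; simpl; auto; try congruence. ring. Qed.

Lemma suml_perm l1 l2 : Permutation l1 l2 -> suml l1 = suml l2.
Proof. induction 1; simpl; auto; try congruence. lia. Qed.

Lemma prodw_scale k a l : prodw (fun s => k * a s) l = k ^ length l * prodw a l.
Proof. induction l; simpl; [ring|]. rewrite IHl. ring. Qed.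

Lemma prodw_ge0 n a l : nonneg_vec n a -> (forall s, In s l -> (s < n)%nat) -> 0 <= prodw a l.
Proof.
  intros Ha Hl. induction l; simpl; [lra|].
  apply Rmult_le_pos; [apply Ha, Hl; simpl; auto|]. apply IHl. intros; apply Hl; simpl; auto.
Qed.

Lemma prodw_mono n a b l : nonneg_vec n a -> (forall s, (s < n)%nat -> a s <= b s) ->
  (forall s, In s l -> (s < n)%nat) -> prodw a l <= prodw b l.
Proof.
  intros Ha Hab Hl. induction l; simpl; [lra|].
  assert (Hs : (a0 < n)%nat) by (apply Hl; simpl; auto).
  apply Rmult_le_compat; auto.
  - apply prodw_ge0 with n; auto. intros; apply Hl; simpl; auto.
  - apply IHl. intros; apply Hl; simpl; auto.
Qed.

Section CircPow.
Variables (n : nat) (a : nat -> R).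
Hypotheses (Hn : (0 < n)%nat) (Ha : nonneg_vec n a).

Lemma circ_pow_ge0 t x i : 0 <= circ_pow n a t x i.
Proof. apply lmax_ge0. Qed.

Lemma circ_pow_ge t x i l : step_list n t l ->
  prodw a l * x ((i + suml l) mod n)%nat <= circ_pow n a t x i.
Proof. intros Hl. apply lmax_ge, in_map_iff. exists l; split; auto. apply in_idx_lists, Hl. Qed.

Lemma circ_pow_le t x i b : 0 <= b ->
  (forall l, step_list n t l -> prodw a l * x ((i + suml l) mod n)%nat <= b) ->
  circ_pow n a t x i <= b.
Proof.
  intros Hb H. apply lmax_le; auto. intros r Hr. apply in_map_iff in Hr.
  destruct Hr as [l [<- Hl]]. apply H, in_idx_lists, Hl.
Qed.

Lemma circ_pow_attained t x i : circ_pow n a t x i = 0 \/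
  exists l, step_list n t l /\ circ_pow n a t x i = prodw a l * x ((i + suml l) mod n)%nat.
Proof.
  destruct (lmax_attained
    (map (fun l => prodw a l * x ((i + suml l) mod n)%nat) (idx_lists n t))) as [H|H].
  - left; exact H.
  - right. apply in_map_iff in H. destruct H as [l [H1 H2]]. exists l; split.
    + apply in_idx_lists, H2.
    + unfold circ_pow. rewrite <- H1. reflexivity.
Qed.

Lemma circ_pow_ext t x y i : (forall j, (j < n)%nat -> x j = y j) ->
  circ_pow n a t x i = circ_pow n a t y i.
Proof.
  intros H. unfold circ_pow. f_equal. apply map_ext. intros l. rewrite H; auto. apply mod_lt; auto.
Qed.

Lemma circ_pow_0 x i : (i < n)%nat -> 0 <= x i -> circ_pow n a 0 x i = x i.
Proof.
  intros Hi Hx. unfold circ_pow. simpl. rewrite Nat.add_0_r, Nat.mod_small by auto.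
  rewrite Rmult_1_l. apply Rmax_left. auto.
Qed.

Lemma circ_pow_S t x i :
  circ_pow n a (S t) x i = maxl n (fun s => a s * circ_pow n a t x ((i + s) mod n)%nat).
Proof.
  apply Rle_antisym.
  - apply circ_pow_le; [apply maxl_ge0|]. intros l [Hlen Hl].
    destruct l as [|s l']; simpl in Hlen; [discriminate|].
    assert (Hs : (s < n)%nat) by (apply Hl; simpl; auto).
    apply Rle_trans with (a s * circ_pow n a t x ((i + s) mod n)%nat).
    + simpl. rewrite Rmult_assoc. apply Rmult_le_compat_l; [apply Ha; auto|].
      replace ((i + (s + suml l')) mod n)%nat with (((i + s) mod n + suml l') mod n)%nat.
      * apply circ_pow_ge. split; [lia|]. intros; apply Hl; simpl; auto.
      * rewrite Nat.Div0.add_mod_idemp_l. f_equal. lia.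
    + apply (maxl_ge n (fun s => a s * circ_pow n a t x ((i + s) mod n)%nat)). auto.
  - apply maxl_le; [apply circ_pow_ge0|]. intros s Hs.
    destruct (circ_pow_attained t x ((i + s) mod n)%nat) as [H|[l' [[H1 H2] H]]].
    + rewrite H, Rmult_0_r. apply circ_pow_ge0.
    + rewrite H, <- Rmult_assoc.
      replace ((((i + s) mod n) + suml l') mod n)%nat with ((i + suml (s :: l')) mod n)%nat.
      * apply (circ_pow_ge (S t) x i (s :: l')). split; simpl; [lia|].
        intros s' [<-|Hs']; auto.
      * rewrite Nat.Div0.add_mod_idemp_l. f_equal. simpl. lia.
Qed.

Lemma circ_pow_add s t z i : nonneg_vec n z -> (i < n)%nat ->
  circ_pow n a (s + t) z i = circ_pow n a s (circ_pow n a t z) i.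
Proof.
  intros Hz. revert i. induction s; intros i Hi.
  - simpl. rewrite circ_pow_0; auto. apply circ_pow_ge0.
  - simpl. rewrite !circ_pow_S. apply maxl_ext. intros s' Hs'.
    rewrite IHs; auto. apply mod_lt; auto.
Qed.

Lemma circ_pow_mono_vec t z z' i : (forall j, (j < n)%nat -> z j <= z' j) ->
  circ_pow n a t z i <= circ_pow n a t z' i.
Proof.
  intros H. apply circ_pow_le; [apply circ_pow_ge0|]. intros l Hl.
  apply Rle_trans with (prodw a l * z' ((i + suml l) mod n)%nat).
  - apply Rmult_le_compat_l; [apply prodw_ge0 with n, Hl; auto|]. apply H, mod_lt; auto.
  - apply circ_pow_ge; auto.
Qed.

Lemma circ_pow_mono_coef b t z i : (forall s, (s < n)%nat -> a s <= b s) -> nonneg_vec n z ->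
  circ_pow n a t z i <= circ_pow n b t z i.
Proof.
  intros Hab Hz. apply circ_pow_le; [apply lmax_ge0|]. intros l Hl.
  apply Rle_trans with (prodw b l * z ((i + suml l) mod n)%nat).
  - apply Rmult_le_compat_r; [apply Hz, mod_lt; auto|]. apply prodw_mono with n, Hl; auto.
  - apply lmax_ge, in_map_iff. exists l; split; auto. apply in_idx_lists, Hl.
Qed.

End CircPow.

Lemma circ_pow_scale_vec n a t z i k : 0 <= k ->
  circ_pow n a t (fun j => k * z j) i = k * circ_pow n a t z i.
Proof.
  intros Hk. unfold circ_pow. rewrite <- lmax_scale, map_map by auto. f_equal.
  apply map_ext. intros l. ring.
Qed.

Lemma circ_pow_scale_coef n a t z i k : 0 <= k ->
  circ_pow n (fun s => k * a s) t z i = k ^ t * circ_pow n a t z i.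
Proof.
  intros Hk. unfold circ_pow. rewrite <- lmax_scale, map_map by (apply pow_le; auto). f_equal.
  apply map_ext_in. intros l Hl. apply in_idx_lists in Hl. destruct Hl as [H1 _].
  rewrite prodw_scale, H1. ring.
Qed.

Lemma mvec_Circ n a v i : (0 < n)%nat -> (i < n)%nat ->
  mvec n (Circ n a) v i = maxl n (fun s => a s * v ((i + s) mod n)%nat).
Proof.
  intros Hn Hi. unfold mvec, Circ. apply Rle_antisym.
  - apply maxl_le; [apply maxl_ge0|]. intros j Hj.
    set (s := ((j + n - i) mod n)%nat).
    replace (v j) with (v ((i + s) mod n)%nat) by (unfold s; rewrite mod_add_sub; auto).
    apply (maxl_ge n (fun s => a s * v ((i + s) mod n)%nat)), mod_lt; auto.
  - apply maxl_le; [apply maxl_ge0|]. intros s Hs.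
    replace (a s) with (a ((((i + s) mod n) + n - i) mod n)%nat) by (rewrite mod_sub_add; auto).
    apply (maxl_ge n (fun j => a ((j + n - i) mod n)%nat * v j)), mod_lt; auto.
Qed.

Lemma mvec_mmul n A B x i : (forall k, (k < n)%nat -> 0 <= A i k) -> nonneg_vec n x ->
  mvec n (mmul n A B) x i = mvec n A (mvec n B x) i.
Proof.
  intros HA Hx. unfold mvec, mmul. apply Rle_antisym.
  - apply maxl_le; [apply maxl_ge0|]. intros j Hj.
    destruct (maxl_attained n (fun k => A i k * B k j)) as [H|[k [Hk H]]].
    + rewrite H, Rmult_0_l. apply maxl_ge0.
    + rewrite H, Rmult_assoc.
      apply Rle_trans with (A i k * maxl n (fun j => B k j * x j)).
      * apply Rmult_le_compat_l; auto. apply (maxl_ge n (fun j => B k j * x j)); auto.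
      * apply (maxl_ge n (fun k => A i k * maxl n (fun j => B k j * x j))); auto.
  - apply maxl_le; [apply maxl_ge0|]. intros k Hk.
    destruct (maxl_attained n (fun j => B k j * x j)) as [H|[j [Hj H]]].
    + rewrite H, Rmult_0_r. apply maxl_ge0.
    + rewrite H, <- Rmult_assoc.
      apply Rle_trans with (maxl n (fun k => A i k * B k j) * x j).
      * apply Rmult_le_compat_r; [apply Hx; auto|].
        apply (maxl_ge n (fun k => A i k * B k j)); auto.
      * apply (maxl_ge n (fun j => maxl n (fun k => A i k * B k j) * x j)); auto.
Qed.

Lemma mvec_mid n x i : (i < n)%nat -> nonneg_vec n x -> mvec n mid x i = x i.
Proof.
  intros Hi Hx. unfold mvec, mid. apply Rle_antisym.
  - apply maxl_le; [apply Hx; auto|]. intros j Hj.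
    destruct (Nat.eq_dec i j); [subst; lra|]. rewrite Rmult_0_l. apply Hx; auto.
  - apply Rle_trans with ((if Nat.eq_dec i i then 1 else 0) * x i).
    + destruct (Nat.eq_dec i i); [lra|congruence].
    + apply (maxl_ge n (fun j => (if Nat.eq_dec i j then 1 else 0) * x j)); auto.
Qed.

Lemma mvec_mpow_Circ n a x t i : (0 < n)%nat -> nonneg_vec n a -> nonneg_vec n x -> (i < n)%nat ->
  mvec n (mpow n (Circ n a) t) x i = circ_pow n a t x i.
Proof.
  intros Hn Ha Hx. revert i. induction t; intros i Hi; simpl.
  - rewrite mvec_mid, circ_pow_0; auto.
  - rewrite mvec_mmul, mvec_Circ, circ_pow_S; auto.
    + apply maxl_ext. intros s Hs. rewrite IHt; auto. apply mod_lt; auto.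
    + intros k Hk. apply Ha, mod_lt; auto.
Qed.

(** * The critical step *)

Lemma length_remove_count x l :
  length l = (count_occ Nat.eq_dec l x + length (remove Nat.eq_dec x l))%nat.
Proof.
  induction l; simpl; auto.
  destruct (Nat.eq_dec x a), (Nat.eq_dec a x); subst; simpl; try lia; congruence.
Qed.

Lemma count_occ_remove_neq x s l : s <> x ->
  count_occ Nat.eq_dec (remove Nat.eq_dec x l) s = count_occ Nat.eq_dec l s.
Proof.
  intros H. induction l; simpl; auto. destruct (Nat.eq_dec x a); subst.
  - destruct (Nat.eq_dec a s); [congruence|auto].
  - simpl. destruct (Nat.eq_dec a s); auto.
Qed.

Lemma length_le_count_occ_bound n k l : (forall x, In x l -> (x < n)%nat) ->
  (forall s, (s < n)%nat -> (count_occ Nat.eq_dec l s <= k)%nat) -> (length l <= n * k)%nat.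
Proof.
  revert l; induction n; intros l Hl Hc.
  - destruct l; simpl; auto. specialize (Hl n (or_introl eq_refl)). lia.
  - rewrite (length_remove_count n l).
    assert ((count_occ Nat.eq_dec l n <= k)%nat) by (apply Hc; lia).
    assert ((length (remove Nat.eq_dec n l) <= n * k)%nat).
    { apply IHn.
      - intros x Hx. apply in_remove in Hx. destruct Hx as [Hx1 Hx2]. specialize (Hl x Hx1). lia.
      - intros s Hs. rewrite count_occ_remove_neq by lia. apply Hc; lia. }
    simpl. lia.
Qed.

Lemma Permutation_repeat_count s k l : (k <= count_occ Nat.eq_dec l s)%nat ->
  exists r, Permutation l (repeat s k ++ r).
Proof.
  revert k; induction l; intros k Hk; simpl in Hk.
  - exists []. replace k with 0%nat by lia. auto.
  - destruct (Nat.eq_dec a s).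
    + subst. destruct k.
      * exists (s :: l). auto.
      * destruct (IHl k) as [r Hr]; [lia|]. exists r. simpl. apply perm_skip. auto.
    + destruct (IHl k Hk) as [r Hr]. exists (a :: r).
      apply Permutation_trans with (a :: repeat s k ++ r); [apply perm_skip; auto|].
      apply Permutation_middle.
Qed.

Lemma step_list_repeat_split n M l : (n * n <= M)%nat -> step_list n (S M) l ->
  exists s r, (s < n)%nat /\ Permutation l (repeat s n ++ r).
Proof.
  intros HM [Hlen Hl].
  assert (Hex : exists s, (s < n)%nat /\ (n <= count_occ Nat.eq_dec l s)%nat).
  { apply NNPP. intros Hne.
    assert ((length l <= n * (n - 1))%nat).
    { apply length_le_count_occ_bound; auto. intros s Hs.
      destruct (le_lt_dec n (count_occ Nat.eq_dec l s)); [|lia].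
      exfalso; apply Hne; exists s; auto. }
    nia. }
  destruct Hex as [s [Hs Hcnt]]. destruct (Permutation_repeat_count s n l Hcnt) as [r Hr].
  exists s, r. auto.
Qed.

(* A walk with more than n^2 steps repeats some step n times; since n equal steps
   sum to 0 mod n, they can be traded for n - 1 copies of a critical step c plus one
   extra c pulled out in front without decreasing the weight. *)
Lemma step_list_exchange n a c L M l : (0 < n)%nat -> nonneg_vec n a ->
  (forall s, (s < n)%nat -> a s <= L) -> (c < n)%nat -> a c = L ->
  (n * n <= M)%nat -> step_list n (S M) l ->
  exists l', step_list n M l' /\ prodw a l <= L * prodw a l' /\
             forall i, ((i + suml l) mod n = ((i + suml l') mod n + c) mod n)%nat.
Proof.
  intros Hn Ha HL Hc HaL HM Hl.
  destruct (step_list_repeat_split n M l HM Hl) as [s [r [Hs Hr]]].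
  destruct Hl as [Hlen Hl].
  assert (Hrl : forall y, In y r -> (y < n)%nat).
  { intros y Hy. apply Hl, Permutation_in with (repeat s n ++ r).
    - apply Permutation_sym; auto.
    - apply in_or_app; auto. }
  assert (Hlenr : length l = (n + length r)%nat).
  { rewrite (Permutation_length Hr), length_app, repeat_length. auto. }
  exists (repeat c (n - 1) ++ r). split; [|split].
  - split.
    + rewrite length_app, repeat_length. lia.
    + intros y Hy. apply in_app_or in Hy. destruct Hy as [Hy|Hy]; auto.
      apply repeat_spec in Hy. lia.
  - rewrite (prodw_perm a _ _ Hr), !prodw_app, !prodw_repeat, HaL, <- Rmult_assoc.
    replace (L * L ^ (n - 1)) with (L ^ n)
      by (destruct n; [lia|]; simpl; rewrite Nat.sub_0_r; reflexivity).
    apply Rmult_le_compat_r; [apply prodw_ge0 with n; auto|].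
    apply pow_incr. split; [apply Ha|apply HL]; auto.
  - intros i. rewrite (suml_perm _ _ Hr), !suml_app, !suml_repeat, Nat.Div0.add_mod_idemp_l.
    destruct n as [|n']; [lia|].
    replace (i + (S n' * s + suml r))%nat with (i + suml r + s * S n')%nat by lia.
    replace (i + ((S n' - 1) * c + suml r) + c)%nat with (i + suml r + c * S n')%nat by nia.
    rewrite !Nat.Div0.mod_add. reflexivity.
Qed.

Definition shift (n c : nat) (x : nat -> R) : nat -> R := fun j => x ((j + c) mod n)%nat.

Section Critical.
Variables (n : nat) (a : nat -> R) (c : nat) (L : R).
Hypotheses (Hn : (0 < n)%nat) (Ha : nonneg_vec n a) (HL : forall s, (s < n)%nat -> a s <= L)
  (Hc : (c < n)%nat) (HaL : a c = L).

Lemma circ_pow_S_critical M x i : (n * n <= M)%nat -> nonneg_vec n x ->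
  circ_pow n a (S M) x i = L * circ_pow n a M (shift n c x) i.
Proof.
  intros HM Hx.
  assert (HL0 : 0 <= L) by (rewrite <- HaL; apply Ha; auto).
  apply Rle_antisym.
  - apply circ_pow_le; [apply Rmult_le_pos; auto; apply circ_pow_ge0|]. intros l Hl.
    destruct (step_list_exchange n a c L M l) as [l' [Hl' [Hw Hidx]]]; auto.
    rewrite Hidx.
    apply Rle_trans with (L * (prodw a l' * shift n c x ((i + suml l') mod n)%nat)).
    + rewrite <- Rmult_assoc. apply Rmult_le_compat_r; auto. apply Hx, mod_lt; auto.
    + apply Rmult_le_compat_l; auto. apply circ_pow_ge; auto.
  - destruct (circ_pow_attained n a M (shift n c x) i) as [H|[l [[H1 H2] H]]].
    + rewrite H, Rmult_0_r. apply circ_pow_ge0.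
    + rewrite H. unfold shift. rewrite <- Rmult_assoc, <- HaL.
      replace (((i + suml l) mod n + c) mod n)%nat with ((i + suml (c :: l)) mod n)%nat.
      * apply (circ_pow_ge n a (S M) x i (c :: l)).
        split; simpl; [lia|]. intros y [<-|Hy]; auto.
      * rewrite Nat.Div0.add_mod_idemp_l. f_equal. simpl. lia.
Qed.

Lemma circ_pow_add_critical k M x i : (n * n <= M)%nat -> nonneg_vec n x -> (i < n)%nat ->
  circ_pow n a (M + k) x i = L ^ k * circ_pow n a M (fun j => x ((j + k * c) mod n)%nat) i.
Proof.
  revert x i; induction k; intros x i HM Hx Hi.
  - rewrite Nat.add_0_r, pow_O, Rmult_1_l. apply circ_pow_ext; auto. intros j Hj.
    rewrite Nat.mul_0_l, Nat.add_0_r, Nat.mod_small; auto.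
  - rewrite Nat.add_succ_r, circ_pow_S_critical, IHk by (auto; try lia; intros j Hj; apply Hx, mod_lt; auto).
    rewrite <- tech_pow_Rmult, Rmult_assoc. do 2 f_equal. apply circ_pow_ext; auto.
    intros j Hj. unfold shift. rewrite Nat.Div0.add_mod_idemp_l. f_equal. f_equal. lia.
Qed.

End Critical.

(** * The eigenvalue of a circulant matrix *)

Lemma walkw_Circ_bounds n a M : (0 < n)%nat -> nonneg_vec n a -> (forall s, (s < n)%nat -> a s <= M) ->
  forall l i j, 0 <= walkw (Circ n a) i l j <= M ^ S (length l).
Proof.
  intros Hn Ha HM. induction l as [|h l IH]; intros i j; simpl; unfold Circ at 1.
  - pose proof (mod_lt n (j + n - i) Hn). rewrite Rmult_1_r. split; [apply Ha|apply HM]; auto.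
  - pose proof (mod_lt n (h + n - i) Hn). destruct (IH h j) as [H1 H2].
    split; [apply Rmult_le_pos; [apply Ha|]; auto|].
    apply Rmult_le_compat; [apply Ha|..|apply HM|]; auto.
Qed.

Lemma kroot_le k w M : (1 <= k)%nat -> 0 <= M -> w <= M ^ k -> kroot k w <= M.
Proof.
  intros Hk HM Hw. unfold kroot. destruct (Rle_dec w 0); auto.
  assert (HM0 : 0 < M).
  { destruct (Req_dec M 0) as [E|E]; [|lra]. subst. rewrite pow_i in Hw by lia. lra. }
  apply Rle_trans with (Rpower (M ^ k) (/ INR k)).
  - apply Rle_Rpower_l; [|lra]. apply Rlt_le, Rinv_0_lt_compat, lt_0_INR; lia.
  - rewrite <- Rpower_pow, Rpower_mult, Rinv_r, Rpower_1 by (auto; apply not_0_INR; lia). lra.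
Qed.

Lemma kroot_pow k M : (1 <= k)%nat -> 0 < M -> kroot k (M ^ k) = M.
Proof.
  intros Hk HM. unfold kroot. destruct (Rle_dec (M ^ k) 0) as [H|H].
  - pose proof (pow_lt M k HM). lra.
  - rewrite <- Rpower_pow, Rpower_mult, Rinv_r, Rpower_1 by (auto; apply not_0_INR; lia). auto.
Qed.

Lemma NoDup_map_seq (g : nat -> nat) len s :
  (forall i j, (s <= i < s + len)%nat -> (s <= j < s + len)%nat -> g i = g j -> i = j) ->
  NoDup (map g (seq s len)).
Proof.
  revert s; induction len; intros s H; simpl; constructor.
  - intros Hin. apply in_map_iff in Hin. destruct Hin as [j [Hj Hjin]]. apply in_seq in Hjin.
    assert (s = j) by (apply H; lia). lia.
  - apply IHlen. intros i j Hi Hj E. apply H; lia.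
Qed.

Lemma walkw_Circ_constant_step n a c len k : (0 < n)%nat -> (c < n)%nat ->
  walkw (Circ n a) ((k * c) mod n)%nat (map (fun i => (i * c) mod n)%nat (seq (S k) len))
    (((S k + len) * c) mod n)%nat = a c ^ S len.
Proof.
  intros Hn Hc.
  assert (Hstep : forall k, Circ n a ((k * c) mod n)%nat ((S k * c) mod n)%nat = a c).
  { intros k'. unfold Circ. f_equal.
    replace ((S k' * c) mod n)%nat with (((k' * c) mod n + c) mod n)%nat.
    - apply mod_sub_add; auto. apply mod_lt; auto.
    - rewrite Nat.Div0.add_mod_idemp_l. f_equal. simpl. lia. }
  revert k; induction len; intros k.
  - cbn [seq map walkw]. rewrite Nat.add_0_r, Hstep. ring.
  - cbn [seq map walkw]. rewrite Hstep.
    replace (S k + S len)%nat with (S (S k) + len)%nat by lia.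
    rewrite IHlen. reflexivity.
Qed.

Lemma exists_step_order n c : (0 < n)%nat -> exists m, (1 <= m <= n)%nat /\
  ((m * c) mod n = 0)%nat /\ forall k, (1 <= k < m)%nat -> ((k * c) mod n <> 0)%nat.
Proof.
  intros Hn.
  destruct (dec_inh_nat_subset_has_unique_least_element
              (fun m => (1 <= m)%nat /\ ((m * c) mod n = 0)%nat)) as [m [[[Hm1 Hm2] Hmin] _]].
  - intros k. apply classic.
  - exists n. split; [lia|]. rewrite Nat.mul_comm. apply Nat.Div0.mod_mul.
  - exists m. split; [split; auto|split; auto].
    + apply Hmin. split; [lia|]. rewrite Nat.mul_comm. apply Nat.Div0.mod_mul.
    + intros k Hk Hk0. specialize (Hmin k (conj (proj1 Hk) Hk0)). lia.
Qed.

Lemma NoDup_step_cycle n c m : (0 < n)%nat ->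
  (forall k, (1 <= k < m)%nat -> ((k * c) mod n <> 0)%nat) ->
  NoDup (map (fun i => (i * c) mod n)%nat (seq 0 m)).
Proof.
  intros Hn Hord. apply NoDup_map_seq. intros i j Hi Hj E.
  destruct (Nat.lt_total i j) as [Hij|[Hij|Hij]]; auto; exfalso.
  - apply (Hord (j - i)%nat); [lia|]. apply mod_add_cancel_l with (i * c)%nat; auto.
    replace (i * c + (j - i) * c)%nat with (j * c)%nat by nia. auto.
  - apply (Hord (i - j)%nat); [lia|]. apply mod_add_cancel_l with (j * c)%nat; auto.
    replace (j * c + (i - j) * c)%nat with (i * c)%nat by nia. auto.
Qed.

Lemma lambda_Circ_le n a : (0 < n)%nat -> nonneg_vec n a -> lambda n (Circ n a) <= maxl n a.
Proof.
  intros Hn Ha. apply lmax_le; [apply maxl_ge0|]. intros r Hr.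
  apply in_map_iff in Hr. destruct Hr as [[|i0 rest] [<- _]]; simpl; [apply maxl_ge0|].
  destruct (NoDup_dec Nat.eq_dec (i0 :: rest)); [|apply maxl_ge0].
  apply kroot_le; simpl; [lia|apply maxl_ge0|].
  apply (walkw_Circ_bounds n a); auto. intros; apply maxl_ge; auto.
Qed.

(* The elementary cycle 0, c, 2c, ... (mod n), of length the order of c mod n, has
   all its arcs of weight a c. *)
Lemma lambda_Circ_ge n a c : (0 < n)%nat -> nonneg_vec n a -> (c < n)%nat -> 0 < a c ->
  a c <= lambda n (Circ n a).
Proof.
  intros Hn Ha Hc Hac.
  destruct (exists_step_order n c Hn) as [m [Hm [Hmc Hord]]].
  set (cyc := map (fun i => (i * c) mod n)%nat (seq 0 m)).
  assert (Ecyc : cyc = 0%nat :: map (fun i => (i * c) mod n)%nat (seq 1 (m - 1))).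
  { unfold cyc. destruct m; [lia|]. simpl. rewrite Nat.sub_0_r, Nat.Div0.mod_0_l. reflexivity. }
  assert (Hin : In cyc (flat_map (fun k => idx_lists n k) (seq 1 n))).
  { apply in_flat_map. exists m. split; [apply in_seq; lia|].
    apply in_idx_lists. unfold cyc. rewrite length_map, length_seq. split; auto.
    intros s Hs. apply in_map_iff in Hs. destruct Hs as [i [<- _]]. apply mod_lt; auto. }
  apply Rle_trans with (cycle_gmean (Circ n a) cyc); [|apply lmax_ge, in_map; auto].
  pose proof (NoDup_step_cycle n c m Hn Hord) as Hnd. fold cyc in Hnd.
  rewrite Ecyc in Hnd |- *. unfold cycle_gmean.
  destruct (NoDup_dec Nat.eq_dec _) as [_|F]; [|contradiction].
  pose proof (walkw_Circ_constant_step n a c (m - 1) 0 Hn Hc) as W.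
  replace (S 0 + (m - 1))%nat with m in W by lia.
  rewrite Hmc, Nat.mul_0_l, Nat.Div0.mod_0_l in W. rewrite W.
  replace (length _) with (S (m - 1)) by (simpl; rewrite length_map, length_seq; reflexivity).
  rewrite kroot_pow; [lra|lia|auto].
Qed.

Lemma lambda_Circ n a : (0 < n)%nat -> nonneg_vec n a -> lambda n (Circ n a) = maxl n a.
Proof.
  intros Hn Ha. apply Rle_antisym; [apply lambda_Circ_le; auto|].
  destruct (maxl_attained n a) as [H|[c [Hc H]]]; rewrite H; [apply lmax_ge0|].
  destruct (Rle_lt_dec (a c) 0); [apply Rle_trans with 0; auto; apply lmax_ge0|].
  apply lambda_Circ_ge; auto.
Qed.

Definition attracted_at (n : nat) (a : nat -> R) (L : R) (x : nat -> R) (t : nat) : Prop :=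
  forall i, (i < n)%nat -> circ_pow n a (S t) x i = L * circ_pow n a t x i.

Lemma Attr_Circ n a x : (0 < n)%nat -> nonneg_vec n a ->
  Attr n (Circ n a) x <-> nonneg_vec n x /\ exists t, attracted_at n a (maxl n a) x t.
Proof.
  intros Hn Ha. unfold Attr, attracted_at. rewrite lambda_Circ by auto.
  split; intros [Hx [t Ht]]; split; auto; exists t; intros i Hi.
  - rewrite <- !mvec_mpow_Circ by auto. auto.
  - rewrite !mvec_mpow_Circ by auto. auto.
Qed.

Lemma attracted_at_scale n a L z t k : 0 < k ->
  attracted_at n (fun s => k * a s) (k * L) z t <-> attracted_at n a L z t.
Proof.
  intros Hk. unfold attracted_at. pose proof (pow_lt k t Hk) as Hkt.
  split; intros H i Hi; specialize (H i Hi); rewrite !circ_pow_scale_coef in * by lra; simpl in *.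
  - apply Rmult_eq_reg_l with (k * k ^ t); [|nra]. rewrite H. ring.
  - rewrite H. ring.
Qed.

Lemma attracted_at_max0 n a x t : (0 < n)%nat -> nonneg_vec n a ->
  (forall s, (s < n)%nat -> a s <= 0) -> attracted_at n a 0 x t.
Proof.
  intros Hn Ha H0 i Hi. rewrite Rmult_0_l, circ_pow_S by auto.
  apply Rle_antisym; [|apply maxl_ge0]. apply maxl_le; [lra|]. intros s Hs.
  replace (a s) with 0 by (apply Rle_antisym; auto; apply Ha; auto). lra.
Qed.

Section Attraction.
Variables (n : nat) (a : nat -> R) (L : R).
Hypotheses (Hn : (0 < n)%nat) (Ha : nonneg_vec n a).

Lemma attracted_at_S x t : 0 <= L -> attracted_at n a L x t -> attracted_at n a L x (S t).
Proof.
  intros HL H i Hi. rewrite circ_pow_S, (circ_pow_S n a Hn Ha t), <- maxl_scale by auto.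
  apply maxl_ext. intros s Hs. rewrite H by (apply mod_lt; auto). ring.
Qed.

Lemma attracted_at_le x t t' : 0 <= L -> (t <= t')%nat ->
  attracted_at n a L x t -> attracted_at n a L x t'.
Proof. intros HL Ht H. induction Ht; auto. apply attracted_at_S; auto. Qed.

Variable c : nat.
Hypotheses (HL : forall s, (s < n)%nat -> a s <= L) (Hc : (c < n)%nat) (HaL : a c = L).

(* Beyond time n^2 the orbit is L times a rotation of itself, so attraction at any
   time can be pulled back to time n^2 by going forward a multiple of n rotations. *)
Lemma attracted_at_sq x t : nonneg_vec n x -> attracted_at n a L x t ->
  attracted_at n a L x (n * n).
Proof.
  intros Hx H.
  destruct (Req_dec L 0) as [HLz|HLz].
  { rewrite HLz. apply attracted_at_max0; auto. intros s Hs. rewrite <- HLz; auto. }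
  assert (HL0 : 0 < L) by (pose proof (Ha c Hc); lra).
  intros i Hi.
  assert (H' : attracted_at n a L x (n * n + t * n)) by (apply attracted_at_le with t; [lra|nia|auto]).
  specialize (H' i Hi).
  rewrite <- Nat.add_succ_l, !(circ_pow_add_critical n a c L) in H' by (auto; lia).
  assert (E : forall M, circ_pow n a M (fun j => x ((j + t * n * c) mod n)%nat) i =
                        circ_pow n a M x i).
  { intros M. apply circ_pow_ext; auto. intros j Hj.
    replace (t * n * c)%nat with ((t * c) * n)%nat by ring.
    rewrite Nat.Div0.mod_add, Nat.mod_small; auto. }
  rewrite !E in H'. pose proof (pow_lt L (t * n) HL0).
  apply Rmult_eq_reg_l with (L ^ (t * n)); [|lra]. rewrite H'. ring.
Qed.

(* Key identity b^(2N) z = b^N (a^N z): ">=" is monotonicity in the coefficients, and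
   "<=" holds because b^(2N) z = L^N b^N (z rotated by N c) while a^N z dominates
   L^N (z rotated by N c) through the walk c, ..., c.  Attraction under a then passes
   through the outer factor b^N. *)
Lemma attracted_at_mono_coef b x t : 0 < L -> (forall s, (s < n)%nat -> a s <= b s) ->
  (forall s, (s < n)%nat -> b s <= L) -> nonneg_vec n x ->
  attracted_at n a L x t -> attracted_at n b L x ((n * n + t) + (n * n + t)).
Proof.
  intros HL0 Hab HbL Hx Ht.
  set (N := (n * n + t)%nat).
  assert (Hb : nonneg_vec n b) by (intros s Hs; apply Rle_trans with (a s); auto).
  assert (HbcL : b c = L) by (apply Rle_antisym; auto; rewrite <- HaL; auto).
  assert (Hsplit : forall z i, nonneg_vec n z -> (i < n)%nat ->
            circ_pow n b (N + N) z i = circ_pow n b N (circ_pow n a N z) i).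
  { intros z i Hz Hi. apply Rle_antisym.
    - rewrite (circ_pow_add_critical n b c L) by (auto; unfold N; lia).
      rewrite <- circ_pow_scale_vec by (apply pow_le; lra).
      apply circ_pow_mono_vec; auto. intros j Hj. rewrite <- HaL, <- prodw_repeat.
      replace ((j + N * c) mod n)%nat with ((j + suml (repeat c N)) mod n)%nat
        by (rewrite suml_repeat; reflexivity).
      apply circ_pow_ge; auto. split; [apply repeat_length|].
      intros s Hs. apply repeat_spec in Hs. lia.
    - rewrite circ_pow_add by auto. apply circ_pow_mono_vec; auto. intros j Hj.
      apply circ_pow_mono_coef; auto. }
  assert (HN : attracted_at n a L x N) by (apply attracted_at_le with t; auto; [lra|unfold N; lia]).
  intros i Hi.
  rewrite (circ_pow_S_critical n b c L) by (auto; unfold N; lia).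
  rewrite Hsplit, (Hsplit x i) by (auto; intros j Hj; apply Hx, mod_lt; auto).
  f_equal. apply circ_pow_ext; auto. intros j Hj. specialize (HN j Hj).
  rewrite (circ_pow_S_critical n a c L) in HN by (auto; unfold N; lia).
  apply Rmult_eq_reg_l with L; lra.
Qed.

End Attraction.

(** * Max-linear forms on a box *)

Definition form (n : nat) (f x : nat -> R) : R := maxl n (fun u => f u * x u).
Definition unit_vec (u : nat) : nat -> R := fun j => if Nat.eq_dec j u then 1 else 0.
Definition corner (lo hi : nat -> R) (k : nat) : nat -> R :=
  fun u => if Nat.eq_dec u k then hi u else lo u.

Lemma form_mono n f x y : nonneg_vec n f -> (forall u, (u < n)%nat -> x u <= y u) ->
  form n f x <= form n f y.
Proof. intros Hf H. apply maxl_mono. intros k Hk. apply Rmult_le_compat_l; auto. Qed.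

Lemma form_le_add n f y z e : nonneg_vec n f -> 0 <= e ->
  (forall j, (j < n)%nat -> y j <= z j + e) -> form n f y <= form n f z + maxl n f * e.
Proof.
  intros Hf He H. apply maxl_le.
  { apply Rplus_le_le_0_compat; [apply maxl_ge0|apply Rmult_le_pos; auto; apply maxl_ge0]. }
  intros u Hu. apply Rle_trans with (f u * z u + f u * e).
  - rewrite <- Rmult_plus_distr_l. apply Rmult_le_compat_l; auto.
  - apply Rplus_le_compat; [apply (maxl_ge n (fun u => f u * z u)); auto|].
    apply Rmult_le_compat_r; auto. apply maxl_ge; auto.
Qed.

Lemma eq_of_approx d1 d2 K : 0 <= K ->
  (forall e, 0 < e -> d1 <= d2 + K * e /\ d2 <= d1 + K * e) -> d1 = d2.
Proof.
  intros HK H. apply NNPP. intros Hne.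
  set (e := Rabs (d1 - d2) / (2 * (K + 1))).
  assert (Hd : 0 < Rabs (d1 - d2)) by (apply Rabs_pos_lt; lra).
  assert (He : 0 < e) by (unfold e; apply Rdiv_lt_0_compat; lra).
  assert (E : (K + 1) * e = Rabs (d1 - d2) / 2) by (unfold e; field; lra).
  destruct (H e He) as [H1 H2].
  unfold Rabs in *. destruct (Rcase_abs (d1 - d2)); nra.
Qed.

Lemma form_eq_of_approx n f g z : nonneg_vec n f -> nonneg_vec n g ->
  (forall e, 0 < e -> exists y, (forall j, (j < n)%nat -> y j <= z j + e /\ z j <= y j + e) /\
                                form n f y = form n g y) ->
  form n f z = form n g z.
Proof.
  intros Hf Hg H. apply eq_of_approx with (maxl n f + maxl n g).
  { apply Rplus_le_le_0_compat; apply maxl_ge0. }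
  intros e He. destruct (H e He) as [y [Hy Efg]].
  pose proof (form_le_add n f z y e Hf (Rlt_le _ _ He) (fun j Hj => proj2 (Hy j Hj))).
  pose proof (form_le_add n f y z e Hf (Rlt_le _ _ He) (fun j Hj => proj1 (Hy j Hj))).
  pose proof (form_le_add n g z y e Hg (Rlt_le _ _ He) (fun j Hj => proj2 (Hy j Hj))).
  pose proof (form_le_add n g y z e Hg (Rlt_le _ _ He) (fun j Hj => proj1 (Hy j Hj))).
  split; nra.
Qed.

Lemma circ_pow_form n a t z i : (0 < n)%nat -> nonneg_vec n a -> nonneg_vec n z ->
  circ_pow n a t z i = form n (fun u => circ_pow n a t (unit_vec u) i) z.
Proof.
  intros Hn Ha Hz. unfold form. apply Rle_antisym.
  - apply circ_pow_le; [apply maxl_ge0|]. intros l Hl.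
    set (u := ((i + suml l) mod n)%nat).
    assert (Hu : (u < n)%nat) by (apply mod_lt; auto).
    apply Rle_trans with (circ_pow n a t (unit_vec u) i * z u).
    + apply Rmult_le_compat_r; [apply Hz; auto|].
      replace (prodw a l) with (prodw a l * unit_vec u ((i + suml l) mod n)%nat)
        by (unfold unit_vec; fold u; destruct (Nat.eq_dec u u); [ring|congruence]).
      apply circ_pow_ge; auto.
    + apply (maxl_ge n (fun u => circ_pow n a t (unit_vec u) i * z u)); auto.
  - apply maxl_le; [apply circ_pow_ge0|]. intros u Hu.
    destruct (circ_pow_attained n a t (unit_vec u) i) as [H|[l [Hl H]]].
    + rewrite H, Rmult_0_l. apply circ_pow_ge0.
    + rewrite H. unfold unit_vec. destruct (Nat.eq_dec ((i + suml l) mod n)%nat u) as [E|E].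
      * rewrite Rmult_1_r, <- E. apply circ_pow_ge; auto.
      * rewrite Rmult_0_r, Rmult_0_l. apply circ_pow_ge0.
Qed.

Lemma attracted_at_form n a L z t : (0 < n)%nat -> nonneg_vec n a -> nonneg_vec n z -> 0 <= L ->
  attracted_at n a L z t <->
  forall i, (i < n)%nat -> form n (fun u => circ_pow n a (S t) (unit_vec u) i) z =
                           form n (fun u => L * circ_pow n a t (unit_vec u) i) z.
Proof.
  intros Hn Ha Hz HL. unfold attracted_at.
  assert (E : forall i, L * circ_pow n a t z i = form n (fun u => L * circ_pow n a t (unit_vec u) i) z).
  { intros i. rewrite circ_pow_form by auto. unfold form. rewrite <- maxl_scale by auto.
    apply maxl_ext. intros; ring. }
  split; intros H i Hi; specialize (H i Hi); rewrite E, <- circ_pow_form in *; auto.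
Qed.

Section CornerForms.
Variables (n : nat) (lo hi : nat -> R).
Hypothesis (Hlh : forall u, (u < n)%nat -> 0 <= lo u <= hi u).

Lemma form_corner_le f u : nonneg_vec n f -> (u < n)%nat ->
  form n f (corner lo hi u) <= Rmax (form n f lo) (f u * hi u).
Proof.
  intros Hf Hu. apply maxl_le; [apply Rle_trans with (form n f lo); [apply maxl_ge0|apply Rmax_l]|].
  intros v Hv. unfold corner. destruct (Nat.eq_dec v u).
  - subst. apply Rmax_r.
  - apply Rle_trans with (form n f lo); [|apply Rmax_l].
    apply (maxl_ge n (fun v => f v * lo v)); auto.
Qed.

Lemma form_corner_ge f u : (u < n)%nat -> f u * hi u <= form n f (corner lo hi u).
Proof.
  intros Hu. apply Rle_trans with (f u * corner lo hi u u).
  - unfold corner. destruct (Nat.eq_dec u u); [lra|congruence].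
  - apply (maxl_ge n (fun v => f v * corner lo hi u v)); auto.
Qed.

Lemma form_lo_le_of_corners f g : nonneg_vec n f -> nonneg_vec n g ->
  (forall k, (k < n)%nat -> form n f (corner lo hi k) = form n g (corner lo hi k)) ->
  form n f lo <= form n g lo.
Proof.
  intros Hf Hg Hc. apply Rnot_lt_le. intros Hlt.
  destruct (maxl_attained n (fun u => f u * lo u)) as [H|[u [Hu H]]]; fold (form n f lo) in H.
  { pose proof (maxl_ge0 n (fun u => g u * lo u)). fold (form n g lo) in *. lra. }
  pose proof (form_corner_ge f u Hu) as Ff. pose proof (form_corner_le g u Hg Hu) as Gg.
  pose proof (form_corner_le f u Hf Hu) as Fg. pose proof (form_corner_ge g u Hu) as Gf.
  pose proof (maxl_ge0 n (fun u => g u * lo u)) as G0. fold (form n g lo) in G0.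
  specialize (Hc u Hu). specialize (Hf u Hu). specialize (Hg u Hu). destruct (Hlh u Hu).
  assert (f u * lo u <= f u * hi u) by (apply Rmult_le_compat_l; auto).
  assert (Glo : g u * lo u <= form n g lo) by (apply (maxl_ge n (fun v => g v * lo v)); auto).
  assert (Fh : form n f (corner lo hi u) <= f u * hi u).
  { apply Rle_trans with (1 := Fg). apply Rmax_lub; lra. }
  assert (E : g u * hi u = f u * hi u).
  { unfold Rmax in Gg. destruct (Rle_dec (form n g lo) (g u * hi u)); lra. }
  assert (hi u <> 0) by (intros Z; rewrite Z in *; nra).
  apply Rmult_eq_reg_r in E; auto. rewrite E in Glo. lra.
Qed.

Lemma form_le_of_corners f g x : nonneg_vec n f -> nonneg_vec n g ->
  (forall k, (k < n)%nat -> form n f (corner lo hi k) = form n g (corner lo hi k)) ->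
  (forall u, (u < n)%nat -> lo u <= x u <= hi u) -> form n f x <= form n g x.
Proof.
  intros Hf Hg Hc Hx.
  assert (Hlo : form n f lo = form n g lo).
  { apply Rle_antisym; apply form_lo_le_of_corners; auto. intros; symmetry; auto. }
  apply maxl_le; [apply maxl_ge0|]. intros u Hu.
  destruct (Rle_dec (f u * x u) (form n f lo)) as [Hle|Hgt].
  { apply Rle_trans with (1 := Hle). rewrite Hlo. apply form_mono; auto. intros v Hv. apply Hx; auto. }
  apply Rnot_le_lt in Hgt.
  pose proof (maxl_ge0 n (fun u => f u * lo u)). fold (form n f lo) in *.
  destruct (Hx u Hu) as [Hx1 Hx2]. specialize (Hf u Hu).
  assert (Hxu : 0 < x u) by (destruct (Rle_lt_dec (x u) 0); auto; nra).
  (* x dominates the corner u scaled down by b = x u / hi u *)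
  set (b := x u / hi u).
  assert (Hb0 : 0 <= b) by (unfold b; apply Rlt_le, Rdiv_lt_0_compat; lra).
  assert (Hb1 : b <= 1) by (unfold b; apply Rmult_le_reg_r with (hi u); [lra|]; field_simplify; lra).
  assert (Hbx : b * hi u = x u) by (unfold b; field; lra).
  assert (Hgx : b * form n g (corner lo hi u) <= form n g x).
  { unfold form. rewrite <- maxl_scale by auto. apply maxl_mono. intros v Hv. unfold corner.
    destruct (Nat.eq_dec v u) as [->|]; [rewrite <- Hbx; lra|].
    specialize (Hg v Hv). destruct (Hlh v Hv), (Hx v Hv).
    assert (0 <= g v * lo v) by (apply Rmult_le_pos; auto).
    apply Rle_trans with (g v * lo v); [nra|]. apply Rmult_le_compat_l; auto. }
  rewrite <- Hc in Hgx by auto. pose proof (form_corner_ge f u Hu).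
  rewrite <- Hbx. nra.
Qed.

Lemma form_eq_of_corners f g x : nonneg_vec n f -> nonneg_vec n g ->
  (forall k, (k < n)%nat -> form n f (corner lo hi k) = form n g (corner lo hi k)) ->
  (forall u, (u < n)%nat -> lo u <= x u <= hi u) -> form n f x = form n g x.
Proof.
  intros Hf Hg Hc Hx. apply Rle_antisym; apply form_le_of_corners; auto.
  intros; symmetry; auto.
Qed.

End CornerForms.

Lemma attracted_at_of_approx n a L z t : (0 < n)%nat -> nonneg_vec n a -> 0 <= L ->
  nonneg_vec n z ->
  (forall e, 0 < e -> exists y, nonneg_vec n y /\
     (forall j, (j < n)%nat -> y j <= z j + e /\ z j <= y j + e) /\ attracted_at n a L y t) ->
  attracted_at n a L z t.
Proof.
  intros Hn Ha HL Hz H. apply attracted_at_form; auto. intros i Hi.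
  apply form_eq_of_approx.
  - intros u _. apply circ_pow_ge0.
  - intros u _. apply Rmult_le_pos; [lra|apply circ_pow_ge0].
  - intros e He. destruct (H e He) as [y [Hy [Hyz Hya]]]. exists y. split; auto.
    apply (proj1 (attracted_at_form n a L y t Hn Ha Hy HL)); auto.
Qed.

Lemma in_ival_bounds I v : in_ival I v -> lo I <= v <= hi I.
Proof. unfold in_ival. destruct (lo_closed I), (hi_closed I); lra. Qed.

(* Points of I within e of its endpoints; the midpoint keeps them inside an open end. *)
Definition near_lo (I : ival) (e : R) : R :=
  if lo_closed I then lo I else Rmin (lo I + e) ((lo I + hi I) / 2).
Definition near_hi (I : ival) (e : R) : R :=
  if hi_closed I then hi I else Rmax (hi I - e) ((lo I + hi I) / 2).

Lemma near_lo_spec I e : wf_ival I -> 0 < e ->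
  in_ival I (near_lo I e) /\ lo I <= near_lo I e <= lo I + e.
Proof.
  intros [H0 [H1 [v [Hv1 Hv2]]]] He. unfold near_lo, in_ival in *.
  destruct (lo_closed I), (hi_closed I); unfold Rmin; try destruct (Rle_dec _ _); repeat split; lra.
Qed.

Lemma near_hi_spec I e : wf_ival I -> 0 < e ->
  in_ival I (near_hi I e) /\ hi I - e <= near_hi I e <= hi I.
Proof.
  intros [H0 [H1 [v [Hv1 Hv2]]]] He. unfold near_hi, in_ival in *.
  destruct (lo_closed I), (hi_closed I); unfold Rmax; try destruct (Rle_dec _ _); repeat split; lra.
Qed.

Section Robustness.
Variables (n : nat) (X ia : nat -> ival).
Hypotheses (Hn : (0 < n)%nat) (HX : forall i, (i < n)%nat -> wf_ival (X i))
  (Ha : forall t, (t < n)%nat -> wf_ival (ia t)).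

Lemma hat_a_nonneg : nonneg_vec n (hat_a n ia).
Proof.
  intros s Hs. destruct (Ha s Hs) as [H0 [H1 _]].
  apply Rmin_glb; [apply maxl_ge0|lra].
Qed.

Lemma maxl_hat_a : maxl n (hat_a n ia) = lo_max n ia.
Proof.
  apply Rle_antisym; [apply maxl_le; [apply maxl_ge0|intros; apply Rmin_l]|].
  destruct (maxl_attained n (fun k => lo (ia k))) as [H|[k [Hk H]]];
    fold (lo_max n ia) in H; rewrite H; [apply maxl_ge0|].
  apply Rle_trans with (hat_a n ia k); [|apply maxl_ge; auto].
  destruct (Ha k Hk) as [_ [Hlh _]]. unfold hat_a. rewrite H, Rmin_left; lra.
Qed.

Lemma in_X_nonneg x : (forall j, (j < n)%nat -> in_ival (X j) (x j)) -> nonneg_vec n x.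
Proof.
  intros Hx j Hj. destruct (HX j Hj) as [H0 _]. pose proof (in_ival_bounds _ _ (Hx j Hj)). lra.
Qed.

Lemma xk_nonneg k : nonneg_vec n (xk X k).
Proof.
  intros j Hj. destruct (HX j Hj) as [H0 [H1 _]]. unfold xk. destruct (Nat.eq_dec j k); lra.
Qed.

Lemma xk_approx k e : 0 < e -> exists y, (forall j, (j < n)%nat -> in_ival (X j) (y j)) /\
  (forall j, (j < n)%nat -> y j <= xk X k j + e /\ xk X k j <= y j + e).
Proof.
  intros He. exists (fun j => if Nat.eq_dec j k then near_hi (X j) e else near_lo (X j) e).
  split; intros j Hj; unfold xk; destruct (Nat.eq_dec j k);
    [apply near_hi_spec|apply near_lo_spec|..]; auto.
  - destruct (near_hi_spec (X j) e (HX j Hj) He). lra.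
  - destruct (near_lo_spec (X j) e (HX j Hj) He). lra.
Qed.

Lemma Attr_hatA_of_lo_max0 z : lo_max n ia = 0 -> nonneg_vec n z -> Attr n (hatA n ia) z.
Proof.
  intros H0 Hz. apply Attr_Circ; [auto|apply hat_a_nonneg|]. split; auto. exists 0%nat.
  rewrite maxl_hat_a, H0. apply attracted_at_max0; [auto|apply hat_a_nonneg|].
  intros s Hs. rewrite <- H0. apply Rmin_l.
Qed.

Lemma attracted_at_xk_of_robust a k : nonneg_vec n a ->
  (forall x, (forall j, (j < n)%nat -> in_ival (X j) (x j)) -> Attr n (Circ n a) x) ->
  attracted_at n a (maxl n a) (xk X k) (n * n).
Proof.
  intros Han Hrob.
  destruct (maxl_attained_index n a Hn Han) as [c [Hc HcL]].
  apply attracted_at_of_approx; auto; [apply maxl_ge0|apply xk_nonneg|].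
  intros e He. destruct (xk_approx k e He) as [y [HyX Hyz]].
  exists y. split; [apply in_X_nonneg; auto|split; auto].
  destruct (proj1 (Attr_Circ n a y Hn Han) (Hrob y HyX)) as [Hy [t Ht]].
  apply attracted_at_sq with c t; auto. intros; apply maxl_ge; auto.
Qed.

(* a in ia dominates the lower endpoints, so L := max a >= mu := lo_max; hence
   mu a <= L hat_a <= L mu = mu a_c, and monotonicity in the coefficients moves
   attraction from a to hat_a. *)
Lemma Attr_hatA_xk_of_robust a k :
  (forall t, (t < n)%nat -> in_ival (ia t) (a t)) ->
  (forall x, (forall j, (j < n)%nat -> in_ival (X j) (x j)) -> Attr n (Circ n a) x) ->
  Attr n (hatA n ia) (xk X k).
Proof.
  intros Hain Hrob. set (mu := lo_max n ia). set (L := maxl n a).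
  assert (Hab : forall s, (s < n)%nat -> lo (ia s) <= a s <= hi (ia s))
    by (intros; apply in_ival_bounds; auto).
  assert (Han : nonneg_vec n a) by (intros s Hs; destruct (Ha s Hs), (Hab s Hs); lra).
  destruct (Req_dec mu 0) as [Hmu|Hmu]; [apply Attr_hatA_of_lo_max0, xk_nonneg; auto|].
  assert (HmuL : mu <= L) by (apply maxl_mono; intros; apply Hab; auto).
  assert (Hmu0 : 0 < mu) by (pose proof (maxl_ge0 n (fun k => lo (ia k))); unfold mu, lo_max in *; lra).
  destruct (maxl_attained_index n a Hn Han) as [c [Hc HcL]]. fold L in HcL.
  assert (HaL : forall s, (s < n)%nat -> a s <= L) by (intros; apply maxl_ge; auto).
  assert (Hmua : nonneg_vec n (fun s => mu * a s))
    by (intros s Hs; apply Rmult_le_pos; [lra|auto]).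
  assert (Hmua_L : forall s, (s < n)%nat -> mu * a s <= mu * L)
    by (intros s Hs; apply Rmult_le_compat_l; [lra|auto]).
  assert (Hmua_hat : forall s, (s < n)%nat -> mu * a s <= L * hat_a n ia s).
  { intros s Hs. specialize (HaL s Hs). specialize (Han s Hs). destruct (Hab s Hs).
    unfold hat_a, Rmin. fold mu. destruct (Rle_dec mu (hi (ia s))); nra. }
  assert (Hhat_L : forall s, (s < n)%nat -> L * hat_a n ia s <= mu * L).
  { intros s Hs. pose proof (hat_a_nonneg s Hs). pose proof (Rmin_l mu (hi (ia s))).
    rewrite Rmult_comm. apply Rmult_le_compat_r; [lra|auto]. }
  pose proof (attracted_at_xk_of_robust a k Han Hrob) as Hz. fold L in Hz.
  apply attracted_at_scale with (k := mu) in Hz; auto.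
  apply (attracted_at_mono_coef n _ (mu * L) Hn Hmua c Hmua_L Hc) with
    (b := fun s => L * hat_a n ia s) in Hz; auto; [|rewrite HcL; reflexivity|nra|apply xk_nonneg].
  rewrite Rmult_comm, attracted_at_scale in Hz by lra.
  apply Attr_Circ; [auto|apply hat_a_nonneg|]. split; [apply xk_nonneg|].
  rewrite maxl_hat_a. eauto.
Qed.

(* At time n^2 attraction of x is an equality of two max-linear forms in x; equal on
   the corners xk, they are equal on the whole box. *)
Lemma Attr_hatA_of_corners x :
  (forall k, (k < n)%nat -> Attr n (hatA n ia) (xk X k)) ->
  (forall j, (j < n)%nat -> in_ival (X j) (x j)) -> Attr n (hatA n ia) x.
Proof.
  intros Hcorner Hx. pose proof hat_a_nonneg as Hh.
  assert (Hmu : 0 <= lo_max n ia) by apply maxl_ge0.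
  destruct (maxl_attained_index n _ Hn Hh) as [c [Hc Hcmax]].
  apply Attr_Circ; auto. split; [apply in_X_nonneg; auto|]. exists (n * n)%nat.
  rewrite maxl_hat_a in *. apply attracted_at_form; auto; [apply in_X_nonneg; auto|].
  intros i Hi. apply (form_eq_of_corners n (fun j => lo (X j)) (fun j => hi (X j))).
  - intros u Hu. destruct (HX u Hu) as [H0 [H1 _]]. lra.
  - intros u _. apply circ_pow_ge0.
  - intros u _. apply Rmult_le_pos; [lra|apply circ_pow_ge0].
  - intros k Hk. destruct (proj1 (Attr_Circ n _ _ Hn Hh) (Hcorner k Hk)) as [_ [t Ht]].
    rewrite maxl_hat_a in Ht. apply (attracted_at_sq n _ _ Hn Hh c) in Ht;
      [|intros; apply Rmin_l|auto|auto|apply xk_nonneg].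
    apply (proj1 (attracted_at_form n _ _ _ _ Hn Hh (xk_nonneg k) Hmu)); auto.
  - intros u Hu. apply in_ival_bounds; auto.
Qed.

End Robustness.

Theorem theorem4 (n : nat) (X ia : nat -> ival)
  (HX : forall i, (i < n)%nat -> wf_ival (X i))
  (Ha : forall t, (t < n)%nat -> wf_ival (ia t))
  (Hhat : forall t, (t < n)%nat -> in_ival (ia t) (hat_a n ia t)) :
  possibly_robust n ia X <->
  (forall k, (k < n)%nat -> Attr n (hatA n ia) (xk X k)).
Proof.
  destruct (Nat.eq_dec n 0) as [->|Hn0].
  { split; [intros _ k Hk; lia|]. intros _. exists (fun _ => 0). split; [intros; lia|].
    intros x _. split; [intros; lia|]. exists 0%nat. intros; lia. }
  assert (Hn : (0 < n)%nat) by lia.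
  split.
  - intros [a [Hain Hrob]] k _. apply (Attr_hatA_xk_of_robust n X ia) with a; auto.
  - intros Hcorner. exists (hat_a n ia). split; auto.
    intros x Hx. apply (Attr_hatA_of_corners n X ia); auto.
Qed.
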